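(* Define $F(n)$ and $G(n)$ by $F(0)=F(1)=G(0)=G(1)=1$ and, for $n\ge 2$, \[ F(n)=G(n)+\sum_{\ell,m\ge 1,\ \ell+m=n} G(\ell)G(m),\qquad G(n)=F(n-1)+G(n-1)+\sum_{\ell,m\ge 1,\ \ell+m=n-1} G(\ell)G(m). \] Then for all $n\ge 2$, \[ G(n)=2\sum_{m=1}^{n-1} G(m)\,G(n-1-m). \] *)

From mathcomp Require Import all_boot.
Set Implicit Arguments. Unset Strict Implicit. Unset Printing Implicit Defensive.

Definition FG_rec (F G : nat -> nat) : Prop :=
  [/\ [/\ F 0 = 1, F 1 = 1, G 0 = 1 & G 1 = 1],
      (forall n, 2 <= n ->
         F n = G n + \sum_(1 <= l < n) G l * G (n - l))
    & (forall n, 2 <= n ->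
         G n = F n.-1 + G n.-1 + \sum_(1 <= l < n.-1) G l * G (n.-1 - l))].

From mathcomp Require Import all_boot.

(* The recurrence for F, read at n - 1, says that F (n-1) equals the last two summands of the
   recurrence for G, so G n = 2 (G (n-1) + sum_(1 <= l < n-1) G l G (n-1-l)); the right-hand
   side of the theorem is the same convolution with its extra term G (n-1) G 0 = G (n-1). *)

Lemma big_conv_recr (G : nat -> nat) (k : nat) : 0 < k ->
  \sum_(1 <= m < k.+1) G m * G (k - m) =
  \sum_(1 <= m < k) G m * G (k - m) + G k * G 0.
Proof. by move=> k_gt0; rewrite big_nat_recr //= subnn. Qed.

Section Recurrence.

Variables F G : nat -> nat.
Hypothesis hFG : FG_rec F G.

Lemma FG_rec_F (k : nat) : 0 < k ->
  F k = G k + \sum_(1 <= l < k) G l * G (k - l).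
Proof.
case: hFG => [[_ F1 _ G1] HF _]; case: k => [|[|k]] // _.
  by rewrite F1 G1 big_geq.
exact: HF.
Qed.

Lemma FG_rec_G (k : nat) : 0 < k ->
  G k.+1 = 2 * (G k + \sum_(1 <= l < k) G l * G (k - l)).
Proof.
case: hFG => [_ _ HG] k_gt0.
by rewrite HG //= -addnA -FG_rec_F // mul2n -addnn.
Qed.

End Recurrence.

Theorem mainTheorem3 (F G : nat -> nat) (hFG : FG_rec F G) (n : nat) (hn : 2 <= n) :
  G n = 2 * \sum_(1 <= m < n) G m * G (n.-1 - m).
Proof.
have [[_ _ G0 _] _ _] := hFG.
case: n hn => [|k] // k_gt0.
by rewrite (FG_rec_G _ _ hFG) // big_conv_recr // G0 muln1 addnC.
Qed.
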